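(* Let $(Y,d)$ be a complete separable metric space and $f:Y\to Y$ continuous. Let $K\neq\varnothing$ be an isolated invariant set of $f$, and let $N,N'$ be two $f$-admissible isolating neighborhoods of $K$ with \[ N\subset \operatorname{int}N'\cap f^{-1}(\operatorname{int}N'). \] Assume moreover that \[ A^-(N)=A(N)=K. \] Then there exists an $f$-admissible isolating neighborhood $B\subset N$ of $K$ which is positively invariant, i.e. $f(B)\subset B$.
   Context: A full left solution of $f$ in a set $N$ is a sequence $\{x_{-n}\}_{n\in\mathbb N}\subset N$ with $f(x_{n-1})=x_n$ for all $n\le 0$. The following sets are defined for $N\subset Y$: \begin{itemize} \item $A^+(N)=\{x\in N: f^k(x)\in N \text{ for all } k\ge0\}$; \item $A^-(N)=\{x\in N: \text{there is a full left solution in } N \text{ through } x_0=x\}$; \item $A(N)=A^+(N)\cap A^-(N)$, the maximal invariant set in $N$. \end{itemize} A set $K$ is invariant if $A(K)=K$. It is an isolated invariant set, with isolating neighborhood $N$, if $N$ is a closed neighborhood of $K$ with $A(N)=K$. For $0\le l\le m$ put $f^{[l,m]}(x)=\{f^k(x): k\in\mathbb N\cap[l,m]\}$. A closed bounded set $N$ is $f$-admissible if, for any sequences $x_n\in Y$ and $m_n\to\infty$ with $f^{[0,m_n]}(x_n)\subset N$, the sequence $\{f^{m_n}(x_n)\}$ has a convergent subsequence. *)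

From Stdlib Require Import Reals.
Open Scope R_scope.

Section Metric.
Context {Y : Type} (d : Y -> Y -> R).

Definition is_metric : Prop :=
  (forall x y, 0 <= d x y) /\
  (forall x y, d x y = 0 <-> x = y) /\
  (forall x y, d x y = d y x) /\
  (forall x y z, d x z <= d x y + d y z).

Definition cauchy (u : nat -> Y) : Prop :=
  forall eps, 0 < eps -> exists N, forall n m, (N <= n)%nat -> (N <= m)%nat -> d (u n) (u m) < eps.

Definition converges_to (u : nat -> Y) (y : Y) : Prop :=
  forall eps, 0 < eps -> exists N, forall n, (N <= n)%nat -> d (u n) y < eps.

Definition mcomplete : Prop := forall u, cauchy u -> exists y, converges_to u y.

Definition separable : Prop :=
  exists D : Y -> Prop,
    (exists g : Y -> nat, forall x y, D x -> D y -> g x = g y -> x = y) /\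
    (forall x eps, 0 < eps -> exists z, D z /\ d x z < eps).

Definition mcontinuous (f : Y -> Y) : Prop :=
  forall x eps, 0 < eps -> exists delta, 0 < delta /\
    forall y, d x y < delta -> d (f x) (f y) < eps.

Definition mint (N : Y -> Prop) : Y -> Prop :=
  fun x => exists r, 0 < r /\ forall y, d x y < r -> N y.

Definition mclosed (N : Y -> Prop) : Prop :=
  forall x, (forall eps, 0 < eps -> exists y, N y /\ d x y < eps) -> N x.

Definition mbounded (N : Y -> Prop) : Prop :=
  exists x0 r, forall y, N y -> d x0 y <= r.

Definition subset (A B : Y -> Prop) : Prop := forall x, A x -> B x.
Definition set_eq (A B : Y -> Prop) : Prop := forall x, A x <-> B x.

Definition closed_nbhd (N K : Y -> Prop) : Prop :=
  mclosed N /\ subset K (mint N).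

Section Dyn.
Variable f : Y -> Y.

(* full left solution {x_{-n}} in N through x_0 = x, encoded as s n = x_{-n} *)
Definition full_left_solution_through (N : Y -> Prop) (x : Y) : Prop :=
  exists s : nat -> Y, s O = x /\ (forall n, N (s n)) /\ (forall n, f (s (S n)) = s n).

Definition Aplus (N : Y -> Prop) : Y -> Prop :=
  fun x => N x /\ forall k, N (Nat.iter k f x).

Definition Aminus (N : Y -> Prop) : Y -> Prop :=
  fun x => N x /\ full_left_solution_through N x.

Definition Amax (N : Y -> Prop) : Y -> Prop :=
  fun x => Aplus N x /\ Aminus N x.

Definition invariant (K : Y -> Prop) : Prop := set_eq (Amax K) K.

Definition isolating_nbhd (N K : Y -> Prop) : Prop :=
  closed_nbhd N K /\ set_eq (Amax N) K.

Definition isolated_invariant (K : Y -> Prop) : Prop :=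
  invariant K /\ exists N, isolating_nbhd N K.

Definition tends_to_infty (m : nat -> nat) : Prop :=
  forall M, exists n0, forall n, (n0 <= n)%nat -> (M <= m n)%nat.

Definition has_convergent_subseq (u : nat -> Y) : Prop :=
  exists (phi : nat -> nat) (y : Y),
    (forall n, (phi n < phi (S n))%nat) /\ converges_to (fun n => u (phi n)) y.

Definition orbit_segment_in (N : Y -> Prop) (m : nat) (x : Y) : Prop :=
  forall k, (k <= m)%nat -> N (Nat.iter k f x).

Definition admissible (N : Y -> Prop) : Prop :=
  mclosed N /\ mbounded N /\
  forall (x : nat -> Y) (m : nat -> nat),
    tends_to_infty m ->
    (forall n, orbit_segment_in N (m n) (x n)) ->
    has_convergent_subseq (fun n => Nat.iter (m n) f (x n)).

End Dyn.
End Metric.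

(* The positively invariant set is B = A^+(N), the points whose forward orbit
   stays in N.  It is closed, bounded, admissible, f(B) ⊂ B and A(B) = A(N) = K;
   the substance is that K ⊂ int B.  Otherwise points x_n -> z ∈ K leave N for
   the first time at step m_n + 1.  Continuity along the finite orbit segments
   of z forces m_n -> ∞.  Admissibility of N then yields a cluster point y of
   f^{m_n}(x_n) together with a full left solution in N through y, obtained by
   extracting further subsequences of f^{m_n - j}(x_n), j = 1, 2, ...  Hence
   y ∈ A^-(N) = K, so f(y) ∈ int N, whereas f^{m_n + 1}(x_n) ∉ N. *)
From Stdlib Require Import Reals Lia Lra Classical ClassicalEpsilon ChoiceFacts.
Open Scope R_scope.

Lemma inv_INR_succ_lt (eps : R) :
  0 < eps -> exists k0 : nat, forall k, (k0 <= k)%nat -> / (INR k + 1) < eps.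
Proof.
  intros Heps. destruct (archimed_cor1 eps Heps) as [k0 [Hk0 Hpos]].
  exists k0. intros k Hk.
  assert (H1 : 0 < INR k0) by (apply lt_0_INR; lia).
  assert (H2 : INR k0 <= INR k) by (apply le_INR; lia).
  eapply Rlt_trans; [|exact Hk0].
  apply Rinv_lt_contravar; [apply Rmult_lt_0_compat|]; lra.
Qed.

Lemma inv_INR_succ_pos (k : nat) : 0 < / (INR k + 1).
Proof. apply Rinv_0_lt_compat. pose proof (pos_INR k). lra. Qed.

Lemma indexed_dependent_choice (A : Type) (P : nat -> A -> Prop)
    (Rel : A -> A -> Prop) (a0 : A) :
  P O a0 -> (forall j a, P j a -> exists b, P (S j) b /\ Rel b a) ->
  exists s : nat -> A,
    s O = a0 /\ (forall n, P n (s n)) /\ (forall n, Rel (s (S n)) (s n)).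
Proof.
  intros H0 Hstep.
  set (next := fun p q : (nat * A)%type => fst q = S (fst p) /\
         (P (fst p) (snd p) -> P (fst q) (snd q) /\ Rel (snd q) (snd p))).
  destruct (functional_choice_imp_functional_dependent_choice choice
              next) with (x0 := (O, a0)) as [g [Hg0 Hg]].
  { intros [j a]. destruct (classic (P j a)) as [Ha|Ha].
    - destruct (Hstep j a Ha) as [b [Hb Hba]]. exists (S j, b). split; auto.
    - exists (S j, a). split; [reflexivity|]. intros Hp. contradiction. }
  assert (Hinv : forall n, fst (g n) = n /\ P n (snd (g n))).
  { induction n as [|n [Hfst HP]]; [rewrite Hg0; auto|].
    destruct (Hg n) as [Hfst' Hnext]. rewrite Hfst in Hfst', Hnext.
    split; [exact Hfst'|]. rewrite <- Hfst' at 1. apply Hnext, HP. }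
  exists (fun n => snd (g n)). split; [rewrite Hg0; reflexivity|split].
  - intros n. apply Hinv.
  - intros n. destruct (Hg n) as [_ Hnext]. rewrite (proj1 (Hinv n)) in Hnext.
    apply Hnext, Hinv.
Qed.

Section Dynamics.
Variables (Y : Type) (d : Y -> Y -> R) (f : Y -> Y).

Lemma Amax_image (N : Y -> Prop) z : Amax f N z -> Amax f N (f z).
Proof.
  intros [[Hz Hk] [_ [s [Hs0 [HsN Hsf]]]]]. split; [split|split].
  - apply (Hk 1%nat).
  - intros k. rewrite Nat.iter_swap. apply (Hk (S k)).
  - apply (Hk 1%nat).
  - exists (fun n => match n with O => f z | S n' => s n' end).
    split; [reflexivity|split].
    + intros [|n]; [apply (Hk 1%nat)|apply HsN].
    + intros [|n]; simpl; [rewrite Hs0; reflexivity|apply Hsf].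
Qed.

Lemma Amax_iter (N : Y -> Prop) z k : Amax f N z -> Amax f N (Nat.iter k f z).
Proof. intros Hz. induction k; simpl; auto using Amax_image. Qed.

Lemma Aplus_image (N : Y -> Prop) x : Aplus f N x -> Aplus f N (f x).
Proof.
  intros [_ Hk]. split; [apply (Hk 1%nat)|].
  intros k. rewrite Nat.iter_swap. apply (Hk (S k)).
Qed.

Lemma left_solution_iter (s : nat -> Y) :
  (forall n, f (s (S n)) = s n) -> forall k j, Nat.iter k f (s (k + j)%nat) = s j.
Proof.
  intros Hs k. induction k as [|k IH]; intros j; simpl; auto.
  replace (S (k + j)) with (k + S j)%nat by lia. rewrite IH. apply Hs.
Qed.

Lemma left_solution_Aplus (N : Y -> Prop) (s : nat -> Y) :
  (forall n, N (s n)) -> (forall n, f (s (S n)) = s n) ->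
  Aplus f N (s O) -> forall n, Aplus f N (s n).
Proof.
  intros HN Hs [_ Hk] n. split; auto. intros k.
  destruct (Compare_dec.le_lt_dec k n) as [Hle|Hlt].
  - replace n with (k + (n - k))%nat by lia. rewrite left_solution_iter; auto.
  - replace k with ((k - n) + n)%nat by lia. rewrite Nat.iter_add.
    replace (s n) with (s (n + 0)%nat) by (f_equal; lia).
    rewrite left_solution_iter; auto.
Qed.

Lemma Amax_Aplus (N : Y -> Prop) : set_eq (Amax f (Aplus f N)) (Amax f N).
Proof.
  intros x. split.
  - intros [[[Hx _] Hk] [_ [s [Hs0 [HsN Hsf]]]]]. split; split; auto.
    + intros k. apply Hk.
    + exists s. repeat split; auto. intros n. apply HsN.
  - intros Hx. pose proof Hx as [HAp [_ [s [Hs0 [HsN Hsf]]]]].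
    assert (Hit : forall k, Aplus f N (Nat.iter k f x)).
    { intros k. apply (Amax_iter N x k Hx). }
    split; split; auto.
    exists s. repeat split; auto.
    apply left_solution_Aplus; auto. rewrite Hs0. exact HAp.
Qed.

Lemma exit_time (N : Y -> Prop) x :
  N x -> ~ Aplus f N x ->
  exists m, orbit_segment_in f N m x /\ ~ N (Nat.iter (S m) f x).
Proof.
  intros Hx Hout. apply NNPP. intros Hstay. apply Hout. split; auto.
  assert (Hseg : forall m, orbit_segment_in f N m x).
  { induction m as [|m IH]; intros k Hk.
    - replace k with O by lia. exact Hx.
    - destruct (Nat.eq_dec k (S m)) as [->|Hne]; [|apply IH; lia].
      apply NNPP. intros Hnot. apply Hstay. eauto. }
  intros k. apply (Hseg k k). lia.
Qed.

Hypothesis d_metric : is_metric d.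
Hypothesis f_cont : mcontinuous d f.

Lemma dist_small_eq a b : (forall eps, 0 < eps -> d a b < eps) -> a = b.
Proof.
  destruct d_metric as [Hpos [Hzero _]]. intros Hsmall. apply Hzero.
  destruct (Rle_lt_or_eq_dec 0 (d a b) (Hpos a b)) as [Hlt|Heq]; auto.
  specialize (Hsmall _ Hlt). lra.
Qed.

Lemma mcontinuous_iter k : mcontinuous d (Nat.iter k f).
Proof.
  induction k as [|k IH]; intros x eps Heps.
  - exists eps. split; auto.
  - destruct (f_cont (Nat.iter k f x) eps Heps) as [d1 [Hd1 H1]].
    destruct (IH x d1 Hd1) as [d2 [Hd2 H2]].
    exists d2. split; auto. intros y Hy. apply H1, H2, Hy.
Qed.

Lemma Aplus_mclosed (N : Y -> Prop) : mclosed d N -> mclosed d (Aplus f N).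
Proof.
  intros Hcl x Hx. split.
  - apply Hcl. intros eps Heps. destruct (Hx eps Heps) as [y [[Hy _] Hd]]. eauto.
  - intros k. apply Hcl. intros eps Heps.
    destruct (mcontinuous_iter k x eps Heps) as [del [Hdel Hc]].
    destruct (Hx del Hdel) as [y [[_ Hy] Hd]]. exists (Nat.iter k f y). auto.
Qed.

Lemma Aplus_admissible (N : Y -> Prop) :
  admissible d f N -> admissible d f (Aplus f N).
Proof.
  intros [Hcl [[x0 [r Hr]] Hadm]]. split; [apply Aplus_mclosed, Hcl|split].
  - exists x0, r. intros y [Hy _]. auto.
  - intros x m Hm Hseg. apply Hadm; auto. intros n k Hk. apply (Hseg n k Hk).
Qed.

Lemma orbit_segment_near (N : Y -> Prop) z M :
  (forall k, (k <= M)%nat -> mint d N (Nat.iter k f z)) ->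
  exists del, 0 < del /\ forall y, d z y < del -> orbit_segment_in f N M y.
Proof.
  induction M as [|M IH]; intros Hint.
  - destruct (Hint O (le_n O)) as [r [Hr Hball]].
    exists r. split; auto. intros y Hy k Hk. replace k with O by lia. auto.
  - destruct IH as [d1 [Hd1 H1]]; [intros k Hk; apply Hint; lia|].
    destruct (Hint (S M) (le_n _)) as [r [Hr Hball]].
    destruct (mcontinuous_iter (S M) z r Hr) as [d2 [Hd2 H2]].
    exists (Rmin d1 d2). split; [apply Rmin_pos; auto|].
    intros y Hy k Hk.
    destruct (Nat.eq_dec k (S M)) as [->|Hne].
    + apply Hball, H2. eapply Rlt_le_trans; [exact Hy|apply Rmin_r].
    + apply H1; [eapply Rlt_le_trans; [exact Hy|apply Rmin_l]|lia].
Qed.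

Definition cluster_point (u : nat -> Y) (y : Y) : Prop :=
  forall eps, 0 < eps -> forall n0, exists n, (n0 <= n)%nat /\ d (u n) y < eps.

Lemma cluster_point_ext (u v : nat -> Y) y :
  (forall n, u n = v n) -> cluster_point u y -> cluster_point v y.
Proof.
  intros Huv Hu eps Heps n0. destruct (Hu eps Heps n0) as [n [Hn Hd]].
  exists n. rewrite <- Huv. auto.
Qed.

Lemma cluster_point_reindex (u : nat -> Y) (nk : nat -> nat) y :
  (forall k, (k <= nk k)%nat) -> cluster_point (fun k => u (nk k)) y ->
  cluster_point u y.
Proof.
  intros Hnk Hu eps Heps n0. destruct (Hu eps Heps n0) as [k [Hk Hd]].
  exists (nk k). split; auto. specialize (Hnk k). lia.
Qed.

Lemma cluster_point_of_convergent_subseq (u : nat -> Y) :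
  has_convergent_subseq d u -> exists y, cluster_point u y.
Proof.
  intros [phi [y [Hphi Hcv]]]. exists y.
  assert (Hphi_ge : forall k, (k <= phi k)%nat).
  { induction k; [lia|]. specialize (Hphi k). lia. }
  apply (cluster_point_reindex u phi); auto.
  intros eps Heps n0. destruct (Hcv eps Heps) as [k0 Hk0].
  exists (Nat.max k0 n0). split; [lia|]. apply Hk0. lia.
Qed.

Lemma cluster_point_mclosed (N : Y -> Prop) (u : nat -> Y) y :
  mclosed d N -> (forall n, N (u n)) -> cluster_point u y -> N y.
Proof.
  destruct d_metric as [_ [_ [Hsym _]]]. intros Hcl Hu Hy. apply Hcl.
  intros eps Heps. destruct (Hy eps Heps O) as [n [_ Hd]].
  exists (u n). rewrite Hsym. auto.
Qed.

Lemma cluster_point_image_limit (v : nat -> Y) y' y :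
  cluster_point v y' -> converges_to d (fun k => f (v k)) y -> f y' = y.
Proof.
  destruct d_metric as [_ [_ [Hsym Htri]]]. intros Hv Hfv.
  apply dist_small_eq. intros eps Heps.
  destruct (f_cont y' (eps / 2) ltac:(lra)) as [del [Hdel Hc]].
  destruct (Hfv (eps / 2) ltac:(lra)) as [k0 Hk0].
  destruct (Hv del Hdel k0) as [k [Hk Hd]].
  rewrite Hsym in Hd. specialize (Hc _ Hd). specialize (Hk0 k Hk).
  pose proof (Htri (f y') (f (v k)) y). lra.
Qed.

Section Backward.
Variables (N : Y -> Prop) (x : nat -> Y) (m : nat -> nat).
Hypothesis N_adm : admissible d f N.
Hypothesis m_infty : tends_to_infty m.
Hypothesis x_seg : forall n, orbit_segment_in f N (m n) (x n).

Let backward_seq (j : nat) (n : nat) : Y := Nat.iter (m n - j) f (x n).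

Lemma backward_cluster_step j y :
  cluster_point (backward_seq j) y ->
  exists y', cluster_point (backward_seq (S j)) y' /\ f y' = y.
Proof.
  intros Hy. destruct (m_infty (S j)) as [n1 Hn1].
  (* [nk] extracts a subsequence along which the j-th backward points tend to [y];
     admissibility then gives a cluster point of the (j+1)-th ones along it. *)
  destruct (choice (fun k n => (Nat.max k n1 <= n)%nat /\
                      d (backward_seq j n) y < / (INR k + 1))) as [nk Hnk].
  { intros k. destruct (Hy _ (inv_INR_succ_pos k) (Nat.max k n1)) as [n Hn].
    eauto. }
  assert (Hnk_ge : forall k, (k <= nk k)%nat /\ (n1 <= nk k)%nat).
  { intros k. destruct (Hnk k) as [Hle _]. lia. }
  destruct (cluster_point_of_convergent_subseq (fun k => backward_seq (S j) (nk k)))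
    as [y' Hy'].
  { apply N_adm.
    - intros M. destruct (m_infty (M + S j)%nat) as [n0 Hn0]. exists n0.
      intros k Hk. specialize (Hn0 (nk k)). specialize (Hnk_ge k). lia.
    - intros k i Hi. apply (x_seg (nk k)). lia. }
  exists y'. split.
  { exact (cluster_point_reindex _ nk y' (fun k => proj1 (Hnk_ge k)) Hy'). }
  apply (cluster_point_image_limit _ _ _ Hy').
  intros eps Heps. destruct (inv_INR_succ_lt eps Heps) as [k0 Hk0].
  exists k0. intros k Hk. unfold backward_seq at 1.
  rewrite <- Nat.iter_succ.
  replace (S (m (nk k) - S j)) with (m (nk k) - j)%nat
    by (specialize (Hn1 (nk k) (proj2 (Hnk_ge k))); lia).
  eapply Rlt_trans; [apply (Hnk k)|]. auto.
Qed.

Lemma backward_limit_solution :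
  exists y, cluster_point (fun n => Nat.iter (m n) f (x n)) y /\
            full_left_solution_through f N y.
Proof.
  destruct (cluster_point_of_convergent_subseq (fun n => Nat.iter (m n) f (x n)))
    as [y0 Hy0]; [apply N_adm; auto|].
  assert (Hy0' : cluster_point (backward_seq O) y0).
  { apply (cluster_point_ext (fun n => Nat.iter (m n) f (x n))); auto.
    intros n. unfold backward_seq. rewrite Nat.sub_0_r. reflexivity. }
  destruct (indexed_dependent_choice Y (fun j => cluster_point (backward_seq j))
              (fun b a => f b = a) y0 Hy0' backward_cluster_step)
    as [s [Hs0 [Hs Hsf]]].
  exists y0. split; auto. exists s. repeat split; auto.
  intros j. apply (cluster_point_mclosed N (backward_seq j)); [apply N_adm| |apply Hs].
  intros n. apply x_seg. lia.
Qed.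

End Backward.

Section Escape.
Variable N : Y -> Prop.
Hypothesis N_adm : admissible d f N.
Hypothesis Aminus_Amax : subset (Aminus f N) (Amax f N).
Hypothesis Amax_mint : subset (Amax f N) (mint d N).

Lemma exit_times_bounded (x : nat -> Y) (m : nat -> nat) :
  (forall n, orbit_segment_in f N (m n) (x n)) ->
  (forall n, ~ N (Nat.iter (S (m n)) f (x n))) -> ~ tends_to_infty m.
Proof.
  intros Hseg Hexit Hm.
  destruct (backward_limit_solution N x m N_adm Hm Hseg) as [y [Hy Hsol]].
  assert (HyA : Amax f N y).
  { apply Aminus_Amax. split; auto.
    exact (cluster_point_mclosed N _ y (proj1 N_adm)
             (fun n => Hseg n (m n) (le_n _)) Hy). }
  destruct (Amax_mint _ (Amax_image N y HyA)) as [r [Hr Hball]].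
  destruct (f_cont y r Hr) as [del [Hdel Hc]].
  destruct (Hy del Hdel O) as [n [_ Hd]].
  apply (Hexit n). rewrite Nat.iter_succ. apply Hball, Hc.
  destruct d_metric as [_ [_ [Hsym _]]]. rewrite Hsym. exact Hd.
Qed.

Lemma exit_times_unbounded z (x : nat -> Y) (m : nat -> nat) :
  Amax f N z -> (forall n, d z (x n) < / (INR n + 1)) ->
  (forall n, ~ N (Nat.iter (S (m n)) f (x n))) -> tends_to_infty m.
Proof.
  intros Hz Hx Hexit M.
  destruct (orbit_segment_near N z M) as [del [Hdel Hnear]].
  { intros k _. apply Amax_mint, Amax_iter, Hz. }
  destruct (inv_INR_succ_lt del Hdel) as [n0 Hn0]. exists n0.
  intros n Hn. apply NNPP. intros Hlt. apply (Hexit n), Hnear; [|lia].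
  eapply Rlt_trans; [apply Hx|]. auto.
Qed.

Lemma escaping_sequence z :
  mint d N z -> ~ mint d (Aplus f N) z ->
  exists (x : nat -> Y) (m : nat -> nat),
    (forall n, d z (x n) < / (INR n + 1)) /\
    (forall n, orbit_segment_in f N (m n) (x n)) /\
    (forall n, ~ N (Nat.iter (S (m n)) f (x n))).
Proof.
  intros [r0 [Hr0 Hball]] Hout.
  destruct (choice (fun (n : nat) (p : (Y * nat)%type) =>
      d z (fst p) < / (INR n + 1) /\ orbit_segment_in f N (snd p) (fst p) /\
      ~ N (Nat.iter (S (snd p)) f (fst p)))) as [p Hp].
  { intros n. set (rho := Rmin r0 (/ (INR n + 1))).
    assert (Hrho : 0 < rho) by (apply Rmin_pos; auto using inv_INR_succ_pos).
    destruct (not_all_ex_not _ _ (fun H => Hout (ex_intro _ rho (conj Hrho H))))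
      as [y Hy].
    apply imply_to_and in Hy. destruct Hy as [Hzy Hy].
    assert (HyN : N y) by (apply Hball; eapply Rlt_le_trans; [exact Hzy|apply Rmin_l]).
    destruct (exit_time N y HyN Hy) as [m [Hseg Hexit]].
    exists (y, m). repeat split; auto.
    eapply Rlt_le_trans; [exact Hzy|apply Rmin_r]. }
  exists (fun n => fst (p n)), (fun n => snd (p n)).
  repeat split; intros n; apply Hp.
Qed.

Lemma Amax_subset_mint_Aplus : subset (Amax f N) (mint d (Aplus f N)).
Proof.
  intros z Hz. apply NNPP. intros Hout.
  destruct (escaping_sequence z (Amax_mint z Hz) Hout) as [x [m [Hx [Hseg Hexit]]]].
  exact (exit_times_bounded x m Hseg Hexit (exit_times_unbounded z x m Hz Hx Hexit)).
Qed.

End Escape.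
End Dynamics.

Theorem theorem1 (Y : Type) (d : Y -> Y -> R) (f : Y -> Y) (K N N' : Y -> Prop) :
  is_metric d -> mcomplete d -> separable d -> mcontinuous d f ->
  (exists x, K x) ->
  isolated_invariant d f K ->
  admissible d f N -> isolating_nbhd d f N K ->
  admissible d f N' -> isolating_nbhd d f N' K ->
  subset N (fun x => mint d N' x /\ mint d N' (f x)) ->
  set_eq (Aminus f N) (Amax f N) ->
  set_eq (Amax f N) K ->
  exists B : Y -> Prop,
    admissible d f B /\ isolating_nbhd d f B K /\ subset B N /\
    (forall x, B x -> B (f x)).
Proof.
  intros Hmet _ _ Hf _ _ Hadm [[Hcl HKN] _] _ _ _ HAm HAK.
  assert (HKAmax : subset (Amax f N) (mint d (Aplus f N))).
  { apply Amax_subset_mint_Aplus; auto.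
    - intros y Hy. apply HAm, Hy.
    - intros y Hy. apply HKN, HAK, Hy. }
  exists (Aplus f N). split; [|split; [split; [split|]|split]].
  - apply Aplus_admissible; auto.
  - apply Aplus_mclosed; auto.
  - intros z Hz. apply HKAmax, HAK, Hz.
  - intros z. split; intros Hz.
    + apply HAK, Amax_Aplus, Hz.
    + apply Amax_Aplus, HAK, Hz.
  - intros z [Hz _]. exact Hz.
  - apply Aplus_image.
Qed.
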